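(* For any $\lambda\in[0,1)$: $\mathbb{L}^{=1}(\mathrm{QBA}|\mathrm{D})\not\subseteq\mathbb{L}^{>\lambda}(\mathrm{QBA}|\mathrm{D})$.
   Context: A quantum automaton is a tuple $\mathcal{A}=(\mathcal{H},|s_0\rangle,\Sigma,\{U_\sigma:\sigma\in\Sigma\},F)$ where $\mathcal{H}$ is a finite-dimensional complex Hilbert space, $|s_0\rangle$ a unit vector, $\Sigma$ a finite alphabet, each $U_\sigma$ unitary, and $F$ a subspace. For $w=\sigma_1\sigma_2\cdots\in\Sigma^\omega$, a unit vector $|\psi\rangle\in F$ and checkpoints $0\le n_1<n_2<\cdots$, the disturbing run is $|s_0\rangle$ (initial state) and for $n\ge1$: $|s_n\rangle=U_{\sigma_n}|\psi\rangle$ if $n-1=n_i$ for some $i$, else $|s_n\rangle=U_{\sigma_n}|s_{n-1}\rangle$. Then $f^{\mathrm{D}}_{\mathcal{A}}(w)=\sup_{|\psi\rangle}\sup_{\{n_i\}}\inf_{i\ge1}|\langle\psi|s_{n_i}\rangle|^2$ over unit $|\psi\rangle\in F$ and strictly increasing checkpoint sequences. $\mathcal{L}^{=1}(\mathcal{A}|\mathrm{D})=\{w\in\Sigma^\omega:f^{\mathrm{D}}_{\mathcal{A}}(w)=1\}$, $\mathcal{L}^{>\lambda}(\mathcal{A}|\mathrm{D})=\{w:f^{\mathrm{D}}_{\mathcal{A}}(w)>\lambda\}$; $\mathbb{L}^{=1}(\mathrm{QBA}|\mathrm{D})$ and $\mathbb{L}^{>\lambda}(\mathrm{QBA}|\mathrm{D})$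 are the classes of all such languages as $\mathcal{A}$ ranges over all quantum automata. *)

From HB Require Import structures.
From mathcomp Require Import all_boot all_order all_algebra.
From mathcomp Require Import boolp classical_sets reals.
From mathcomp Require Import complex.
Set Implicit Arguments. Unset Strict Implicit. Unset Printing Implicit Defensive.
Import Order.TTheory GRing.Theory Num.Theory.
Local Open Scope ring_scope.
Local Open Scope classical_set_scope.

Section QA.
Variable R : realType.
Local Notation C := (complex R).

Definition sqmod (z : C) : R := (complex.Re z) ^+ 2 + (complex.Im z) ^+ 2.

Definition adjmx m n (A : 'M[C]_(m, n)) : 'M[C]_(n, m) := (map_mx (@conjc R) A)^T.

Definition inner n (phi psi : 'cV[C]_n) : C :=
  \sum_(i < n) conjc (phi i ord0) * psi i ord0.

Definition sqnorm n (v : 'cV[C]_n) : R := \sum_(i < n) sqmod (v i ord0).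

(* A quantum automaton over the finite alphabet Sigma: Hilbert space C^dim,
   initial unit vector s0, unitaries U_sigma, and a subspace F given as the
   row space of a matrix (a column vector v lies in F iff v^T is in the row
   space of qa_F). *)
Record qautomaton (Sigma : finType) := QAut {
  qa_dim : nat;
  qa_s0 : 'cV[C]_qa_dim;
  qa_U : Sigma -> 'M[C]_qa_dim;
  qa_F : 'M[C]_qa_dim;
  qa_s0_unit : sqnorm qa_s0 = 1;
  qa_U_unitary : forall a, adjmx (qa_U a) *m qa_U a = 1%:M
}.

Definition inF (Sigma : finType) (A : qautomaton Sigma) (v : 'cV[C]_(qa_dim A)) : Prop :=
  (v^T <= qa_F A)%MS.

(* The disturbing run on w = sigma_1 sigma_2 ... (w k = sigma_{k+1}),
   with reset vector psi and checkpoints ns 0 < ns 1 < ... (ns i = n_{i+1}):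
   s_0 = s0 ; s_{k+1} = U_{w k} psi if k is a checkpoint, else U_{w k} s_k. *)
Fixpoint drun (Sigma : finType) (A : qautomaton Sigma) (w : nat -> Sigma)
  (psi : 'cV[C]_(qa_dim A)) (ns : nat -> nat) (k : nat) : 'cV[C]_(qa_dim A) :=
  match k with
  | 0 => qa_s0 A
  | k'.+1 => qa_U A (w k') *m
             (if `[< exists i, ns i = k' >] then psi else @drun Sigma A w psi ns k')
  end.

Arguments drun {Sigma} A w psi ns k.

Definition strict_incr (ns : nat -> nat) : Prop := forall i, (ns i < ns i.+1)%N.

Definition fD (Sigma : finType) (A : qautomaton Sigma) (w : nat -> Sigma) : R :=
  sup [set x : R | exists (psi : 'cV[C]_(qa_dim A)) (ns : nat -> nat),
        [/\ sqnorm psi = 1, inF psi, strict_incr ns &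
            x = inf (range (fun i => sqmod (inner psi (drun A w psi ns (ns i)))))]].

Definition lang_eq1 (Sigma : finType) (A : qautomaton Sigma) : set (nat -> Sigma) :=
  [set w | fD A w = 1].

Definition lang_gt (Sigma : finType) (lam : R) (A : qautomaton Sigma) : set (nat -> Sigma) :=
  [set w | lam < fD A w].

End QA.

(* The witness automaton reads [true] as the rotation of C^2 by an angle t with
   cos t = 3/5 and [false] as the identity, starts in the rotation of e_1 and
   resets to the line of e_1.  As (3 + 4i)^j = 3 + 4i (mod 5) for j > 0, t is
   not a rational multiple of pi, so every word true^n false^omega freezes the
   state at a rotation of e_1 that is not parallel to e_1 and gets value < 1,
   whereas true^omega gets value 1: by a pigeonhole argument on a grid, some
   power of any unitary brings a given vector back arbitrarily close to
   itself, so periodic checkpoints keep the fidelity close to 1.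
   The same recurrence shows that any L^{>lam}(B|D) containing a word w also
   contains the words obtained from w by replacing everything after the first
   checkpoint of a witness by a constant letter; hence it cannot be
   L^{=1}(A|D), which contains true^omega but no true^n false^omega. *)

From HB Require Import structures.
From mathcomp Require Import all_boot all_order all_algebra.
From mathcomp Require Import boolp classical_sets reals.
From mathcomp Require Import complex.
From mathcomp Require Import ring lra zify.
Import Order.TTheory GRing.Theory Num.Theory.
Set Implicit Arguments. Unset Strict Implicit. Unset Printing Implicit Defensive.
Local Open Scope ring_scope.
Local Open Scope complex_scope.
Local Open Scope classical_set_scope.

Section Unitary.
Variable R : realType.
Local Notation C := (complex R).
Local Notation Re := (@complex.Re R).
Local Notation Im := (@complex.Im R).
Implicit Types (x y : C) (n : nat).

Lemma sqmod_ge0 x : 0 <= sqmod x.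
Proof. by rewrite addr_ge0 ?sqr_ge0. Qed.

Lemma sqmodM x y : sqmod (x * y) = sqmod x * sqmod y.
Proof. by case: x y => a b [c d]; rewrite /sqmod /=; ring. Qed.

Lemma sqmodJ x : sqmod x^* = sqmod x.
Proof. by case: x => a b; rewrite /sqmod /=; ring. Qed.

Lemma sqmodR (r : R) : sqmod r%:C = r ^+ 2.
Proof. by rewrite /sqmod /= expr0n addr0. Qed.

Lemma sqmodB x y : sqmod (x - y) = sqmod x + sqmod y - 2 * Re (y^* * x).
Proof. by case: x y => a b [c d]; rewrite /sqmod /=; ring. Qed.

Lemma mulJc_sqmod x : x^* * x = (sqmod x)%:C.
Proof.
by case: x => a b; apply/eqP; rewrite eq_complex /sqmod /=; apply/andP; split; apply/eqP; ring.
Qed.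

Lemma Re_sum n (c : 'I_n -> C) : Re (\sum_(i < n) c i) = \sum_(i < n) Re (c i).
Proof. by apply: (big_morph Re) => [[a b] [c' d]|]. Qed.

Lemma sqmod_le_sqnorm n (v : 'cV[C]_n) i : sqmod (v i 0) <= sqnorm v.
Proof. by rewrite /sqnorm (bigD1 i) //= lerDl sumr_ge0 // => j _; apply: sqmod_ge0. Qed.

Lemma sqnormZ n x (v : 'cV[C]_n) : sqnorm (x *: v) = sqmod x * sqnorm v.
Proof. by rewrite /sqnorm mulr_sumr; apply: eq_bigr => i _; rewrite mxE sqmodM. Qed.

Lemma innerZl n x (p u : 'cV[C]_n) : inner (x *: p) u = x^* * inner p u.
Proof.
by rewrite /inner mulr_sumr; apply: eq_bigr => i _; rewrite mxE rmorphM mulrA.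
Qed.

Lemma sqnormB n (u v : 'cV[C]_n) :
  sqnorm (u - v) = sqnorm u + sqnorm v - 2 * Re (inner v u).
Proof.
rewrite /sqnorm /inner Re_sum mulr_sumr -big_split -sumrB /=.
by apply: eq_bigr => i _; rewrite !mxE sqmodB.
Qed.

Lemma sqmod_inner_le1 n (p u : 'cV[C]_n) :
  sqnorm p = 1 -> sqnorm u = 1 -> sqmod (inner p u) <= 1.
Proof.
move=> p1 u1; set z := inner p u.
have : 0 <= sqnorm (u - z *: p) by rewrite sumr_ge0 // => i _; apply: sqmod_ge0.
rewrite sqnormB sqnormZ innerZl mulJc_sqmod p1 u1 /=; lra.
Qed.

Lemma sqmod_inner_ge n (p u : 'cV[C]_n) :
  sqnorm p = 1 -> sqnorm u = 1 -> 1 - sqnorm (u - p) <= sqmod (inner p u).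
Proof.
move=> p1 u1; rewrite sqnormB p1 u1 /sqmod.
have := sqr_ge0 (1 - Re (inner p u)); have := sqr_ge0 (Im (inner p u)); nra.
Qed.

Lemma adjmxM m n p (A : 'M[C]_(m, n)) (B : 'M[C]_(n, p)) :
  adjmx (A *m B) = adjmx B *m adjmx A.
Proof. by rewrite /adjmx map_mxM trmx_mul. Qed.

Lemma adjmx_mul_sqnorm n (v : 'cV[C]_n) : (adjmx v *m v) 0 0 = (sqnorm v)%:C.
Proof.
rewrite /sqnorm mxE rmorph_sum; apply: eq_bigr => i _.
by rewrite /adjmx !mxE mulJc_sqmod.
Qed.

Section Isometry.
Variables (n : nat) (V : 'M[C]_n).
Hypothesis V_unitary : adjmx V *m V = 1%:M.

Lemma sqnorm_unitary (v : 'cV[C]_n) : sqnorm (V *m v) = sqnorm v.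
Proof.
apply: complexI; rewrite -!adjmx_mul_sqnorm adjmxM -mulmxA (mulmxA (adjmx V)).
by rewrite V_unitary mul1mx.
Qed.

Lemma sqnorm_iter k (v : 'cV[C]_n) : sqnorm (iter k (mulmx V) v) = sqnorm v.
Proof. by elim: k => [//|k IH] /=; rewrite sqnorm_unitary. Qed.

Lemma iter_mulmxB k (u v : 'cV[C]_n) :
  iter k (mulmx V) (u - v) = iter k (mulmx V) u - iter k (mulmx V) v.
Proof. by elim: k => [//|k IH] /=; rewrite IH mulmxBr. Qed.

End Isometry.

End Unitary.

Lemma nat_pigeonhole (T : finType) (f : nat -> T) :
  exists k1 k2, (k1 < k2)%N /\ f k1 = f k2.
Proof.
have /injectivePn [i [j neq_ij eq_f]] : ~~ injectiveb (fun k : 'I_#|T|.+1 => f k).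
  by apply/injectiveP => /leq_card; rewrite card_ord ltnn.
case: (ltngtP i j) => [lt_ij|lt_ji|/val_inj eq_ij]; first by exists i, j.
- by exists j, i.
- by rewrite eq_ij eqxx in neq_ij.
Qed.

Section Recurrence.
Variable R : realType.
Local Notation C := (complex R).
Local Notation Re := (@complex.Re R).
Local Notation Im := (@complex.Im R).

Definition cell (M : nat) (r : R) : 'I_(2 * M).+1 :=
  inord (Num.truncn ((r + 1) * M%:R)).

Lemma cell_eq_sqr_le M r1 r2 : (0 < M)%N -> -1 <= r1 <= 1 -> -1 <= r2 <= 1 ->
  cell M r1 = cell M r2 -> (r1 - r2) ^+ 2 <= M%:R ^-2.
Proof.
move=> M_gt0 r1_itv r2_itv.
have Mpos : 0 < M%:R :> R by rewrite ltr0n.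
have scaled_itv (r : R) : -1 <= r <= 1 ->
    0 <= (r + 1) * M%:R /\ (Num.truncn ((r + 1) * M%:R) < (2 * M).+1)%N.
  move=> /andP [r_ge r_le]; split; first by rewrite mulr_ge0 ?ler0n //; lra.
  rewrite ltnS truncn_le_nat -addn1 natrD natrM.
  suff : (r + 1) * M%:R <= 2%:R * M%:R by lra.
  by rewrite ler_wpM2r ?ler0n //; lra.
have [a_ge0 a_lt] := scaled_itv _ r1_itv; have [b_ge0 b_lt] := scaled_itv _ r2_itv.
move/(congr1 val); rewrite /= !inordK // => eq_t.
have := truncn_itv a_ge0; have := truncn_itv b_ge0; rewrite eq_t => /andP [? ?] /andP [? ?].
have -> : (r1 - r2) ^+ 2 = ((r1 + 1) * M%:R - (r2 + 1) * M%:R) ^+ 2 * M%:R ^-2.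
  by field; rewrite gt_eqF.
rewrite -[leRHS]mul1r ler_wpM2r ?invr_ge0 ?exprn_ge0 ?ler0n //.
nra.
Qed.

Lemma coord_itv n (v : 'cV[C]_n) i : sqnorm v = 1 ->
  -1 <= Re (v i 0) <= 1 /\ -1 <= Im (v i 0) <= 1.
Proof.
move=> v1; have := sqmod_le_sqnorm v i; rewrite v1 /sqmod => le1.
have := sqr_ge0 (Re (v i 0)); have := sqr_ge0 (Im (v i 0)).
by split; apply/andP; split; nra.
Qed.

Definition grid_code n M (v : 'cV[C]_n) : {ffun 'I_n * bool -> 'I_(2 * M).+1} :=
  [ffun ib => cell M (if ib.2 then Re (v ib.1 0) else Im (v ib.1 0))].

Lemma grid_code_close n M (u v : 'cV[C]_n) : (0 < M)%N ->
  sqnorm u = 1 -> sqnorm v = 1 -> grid_code M u = grid_code M v ->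
  sqnorm (u - v) <= 2 * n%:R / M%:R ^+ 2.
Proof.
move=> M_gt0 u1 v1 /ffunP eq_code.
apply: (@le_trans _ _ (\sum_(i < n) 2 / M%:R ^+ 2)); last first.
  by rewrite sumr_const card_ord -[_ *+ n]mulr_natr mulrAC.
apply: ler_sum => i _; rewrite !mxE.
move: (coord_itv i u1) (coord_itv i v1) (eq_code (i, true)) (eq_code (i, false)).
rewrite !ffunE /=.
case: (u i 0) (v i 0) => a b [c d] /= [a_itv b_itv] [c_itv d_itv] eq_re eq_im.
have := cell_eq_sqr_le M_gt0 a_itv c_itv eq_re.
have := cell_eq_sqr_le M_gt0 b_itv d_itv eq_im.
rewrite /sqmod /= => ? ?; rewrite mulr_natl mulr2n; exact: lerD.
Qed.

Lemma unitary_recurrence n (V : 'M[C]_n) (psi : 'cV[C]_n) (delta : R) :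
  adjmx V *m V = 1%:M -> sqnorm psi = 1 -> 0 < delta ->
  exists2 m, (0 < m)%N & 1 - delta <= sqmod (inner psi (iter m (mulmx V) psi)).
Proof.
move=> V_unitary psi1 delta_gt0.
pose M := (Num.truncn (2 * n%:R / delta)).+1.
have [k1 [k2 [lt_k12 eq_code]]] :=
  nat_pigeonhole (fun k => grid_code M (iter k (mulmx V) psi)).
exists (k2 - k1)%N; first by rewrite subn_gt0.
set v := iter (k2 - k1) (mulmx V) psi.
have v1 : sqnorm v = 1 by rewrite sqnorm_iter.
have close : sqnorm (v - psi) <= 2 * n%:R / M%:R ^+ 2.
  rewrite -(sqnorm_iter V_unitary k1) iter_mulmxB /v -iterD subnKC; last exact: ltnW.
  by apply: grid_code_close; rewrite ?sqnorm_iter // eq_code.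
have M_big : 2 * n%:R / M%:R ^+ 2 <= delta.
  have : 0 <= 2 * n%:R / delta by rewrite divr_ge0 ?mulr_ge0 ?ler0n ?ltW.
  move=> /truncn_itv /andP [_]; rewrite -/M ltr_pdivrMr // => lt_M.
  have M_ge1 : 1 <= M%:R :> R by rewrite ler1n.
  have : 0 <= (M%:R - 1) * (M%:R * delta).
    by apply: mulr_ge0; [rewrite subr_ge0 | apply: mulr_ge0 (ler0n _ _) (ltW _)].
  rewrite ler_pdivrMr ?exprn_gt0 //; lra.
have := sqmod_inner_ge psi1 v1; lra.
Qed.

End Recurrence.

Lemma inf_range_le (R : realType) (f : nat -> R) i :
  (forall j, 0 <= f j) -> inf (range f) <= f i.
Proof. by move=> f_ge0; apply: ge_inf; [exists 0 => _ [j _ <-] | exists i]. Qed.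

Lemma strict_incr_ge (ns : nat -> nat) i : strict_incr ns -> (ns 0 <= ns i)%N.
Proof. by move=> ns_incr; elim: i => // i IH; exact: leq_trans IH (ltnW (ns_incr i)). Qed.

Section DisturbingRun.
Variables (R : realType) (Sigma : finType) (A : qautomaton R Sigma).
Local Notation C := (complex R).
Local Notation U := (qa_U A).
Implicit Types (w : nat -> Sigma) (psi : 'cV[C]_(qa_dim A)).

Fixpoint run w k : 'cV[C]_(qa_dim A) :=
  if k is k'.+1 then U (w k') *m run w k' else qa_s0 A.

Lemma eq_run w w' k : (forall t, (t < k)%N -> w t = w' t) -> run w k = run w' k.
Proof. by elim: k => [//|k IH] eq_w /=; rewrite eq_w // IH // => t /ltnW; apply: eq_w. Qed.

Lemma drun_run w psi ns k : (forall i, (k <= ns i)%N) -> drun (A:=A) w psi ns k = run w k.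
Proof.
elim: k => [//|k IH] le_k /=; rewrite IH; last by move=> i; apply: ltnW (le_k i).
by congr (_ *m _); case: asboolP => // -[i ns_i]; move: (le_k i); rewrite ns_i ltnn.
Qed.

Lemma sqnorm_drun w psi ns k : sqnorm psi = 1 -> sqnorm (drun (A:=A) w psi ns k) = 1.
Proof.
move=> psi1; elim: k => [|k IH] /=; first exact: qa_s0_unit.
by rewrite sqnorm_unitary ?qa_U_unitary //; case: ifP.
Qed.

Lemma drun_periodic w psi b n0 m i t : (forall k, (n0 <= k)%N -> w k = b) ->
  (0 < t <= m)%N ->
  drun (A:=A) w psi (fun j => n0 + m * j)%N (n0 + m * i + t) = iter t (mulmx (U b)) psi.
Proof.
move=> w_b; elim: t => [//|t IH] /andP [_ le_tm].
rewrite addnS /= w_b; last by rewrite -addnA leq_addr.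
congr (_ *m _).
case: (posnP t) => [-> | t_gt0]; first by rewrite addn0; case: asboolP => // -[]; exists i.
rewrite IH; last by rewrite t_gt0 ltnW.
case: asboolP => // -[j].
rewrite -addnA => /addnI eq_j.
by have [le_ji|lt_ij] := leqP j i; nia.
Qed.

Lemma fD_le w c : (exists2 psi : 'cV[C]_(qa_dim A), sqnorm psi = 1 & inF psi) ->
  (forall psi ns, sqnorm psi = 1 -> inF psi -> strict_incr ns ->
     sqmod (inner psi (drun (A:=A) w psi ns (ns 0%N))) <= c) ->
  fD A w <= c.
Proof.
move=> [psi0 psi0_1 psi0_F] le_c; apply: ge_sup.
  exists (inf (range (fun i => sqmod (inner psi0 (drun (A:=A) w psi0 id i))))).
  by exists psi0, id; split => // i.
move=> _ [psi [ns [psi1 psiF ns_incr ->]]].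
apply: le_trans (inf_range_le _ _) (le_c _ _ psi1 psiF ns_incr) => j.
exact: sqmod_ge0.
Qed.

Lemma fD_le1 w : (exists2 psi : 'cV[C]_(qa_dim A), sqnorm psi = 1 & inF psi) -> fD A w <= 1.
Proof.
move=> F_unit; apply: fD_le => // psi ns psi1 _ _.
by apply: sqmod_inner_le1 => //; apply: sqnorm_drun.
Qed.

Lemma fD_ge w psi ns c : sqnorm psi = 1 -> inF psi -> strict_incr ns ->
  (forall i, c <= sqmod (inner psi (drun (A:=A) w psi ns (ns i)))) -> c <= fD A w.
Proof.
move=> psi1 psiF ns_incr le_c.
set f := fun i => sqmod (inner psi (drun (A:=A) w psi ns (ns i))).
have le_inf : c <= inf (range f).
  by apply: lb_le_inf => [|_ [i _ <-]]; [exists (f 0%N), 0%N | exact: le_c].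
apply: le_trans le_inf _; apply: ub_le_sup; last by exists psi, ns.
exists 1 => _ [psi' [ns' [psi'1 _ _ ->]]].
apply: le_trans (inf_range_le 0%N _) _ => [j|]; first exact: sqmod_ge0.
by apply: sqmod_inner_le1 => //; apply: sqnorm_drun.
Qed.

Lemma fD_ge_periodic w psi b n0 m : sqnorm psi = 1 -> inF psi -> (0 < m)%N ->
  (forall k, (n0 <= k)%N -> w k = b) ->
  Num.min (sqmod (inner psi (run w n0)))
          (sqmod (inner psi (iter m (mulmx (U b)) psi))) <= fD A w.
Proof.
move=> psi1 psiF m_gt0 w_b; apply: (@fD_ge w psi (fun i => n0 + m * i)%N) => //.
  by move=> i; rewrite ltn_add2l ltn_pmul2l // ltnSn.
case=> [|i].
  by rewrite muln0 addn0 drun_run ?ge_min ?lexx // => i; apply: leq_addr.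
rewrite mulnSr addnA (drun_periodic psi i w_b); last by rewrite m_gt0 /=.
by rewrite ge_min lexx orbT.
Qed.

Lemma lang_gt_splice lam w : 0 <= lam < 1 -> lam < fD A w ->
  exists n0, forall b, lam < fD A (fun t => if (t < n0)%N then w t else b).
Proof.
case/andP=> lam_ge0 lam_lt1; rewrite /fD; set S := [set _ | _] => lt_sup.
have S_neq0 : S !=set0.
  apply/set0P/eqP => S0; move: lt_sup; rewrite S0 sup0; apply/negP.
  by rewrite -leNgt.
have [_ [psi [ns [psi1 psiF ns_incr ->]]] lt_inf] := sup_gt S_neq0 lt_sup.
exists (ns 0%N) => b.
have lt_f0 : lam < sqmod (inner psi (run w (ns 0%N))).
  rewrite -(@drun_run w psi ns); last by move=> i; apply: strict_incr_ge.
  by apply: lt_le_trans lt_inf (inf_range_le _ _) => i; apply: sqmod_ge0.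
have [|m m_gt0 le_q] := unitary_recurrence (qa_U_unitary A b) psi1 (delta := (1 - lam) / 2).
  by rewrite divr_gt0 // subr_gt0.
apply: lt_le_trans (fD_ge_periodic (n0 := ns 0%N) psi1 psiF m_gt0 _); last first.
  by move=> k; rewrite ltnNge => ->.
rewrite lt_min (@eq_run _ w); last by move=> t ->.
by rewrite lt_f0 /=; apply: lt_le_trans le_q; lra.
Qed.

End DisturbingRun.

Lemma pos_lower_bound (R : realFieldType) (f : nat -> R) K :
  (forall j, 0 < f j) -> exists2 d, 0 < d & forall j, (j <= K)%N -> d <= f j.
Proof.
move=> f_gt0; elim: K => [|K [d d_gt0 le_d]].
  by exists (f 0%N) => // j; rewrite leqn0 => /eqP ->.
exists (Num.min d (f K.+1)); first by rewrite lt_min d_gt0 f_gt0.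
move=> j; rewrite leq_eqVlt ltnS => /orP [/eqP -> | /le_d le_dj].
  by rewrite ge_min lexx orbT.
by rewrite ge_min le_dj.
Qed.

Lemma sum_ord2 (V : nmodType) (F : 'I_2 -> V) : \sum_(i < 2) F i = F ord0 + F ord_max.
Proof. by rewrite big_ord_recl big_ord1; congr (_ + F _); apply: val_inj. Qed.

Lemma ord2P (i : 'I_2) : i = ord0 \/ i = ord_max.
Proof. by case: i => -[|[|//]] ?; [left | right]; apply: val_inj. Qed.

Section RotationAutomaton.
Variable R : realType.
Local Notation C := (complex R).

Definition rot_step (p : R * R) : R * R :=
  (3 / 5 * p.1 - 4 / 5 * p.2, 4 / 5 * p.1 + 3 / 5 * p.2).

(* [rot_xy j = (cos (j t), sin (j t))] with [cos t = 3 / 5], [sin t = 4 / 5]. *)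
Definition rot_xy (j : nat) : R * R := iter j rot_step (1, 0).

Lemma rot_xyS j : rot_xy j.+1 = rot_step (rot_xy j).
Proof. by []. Qed.

Definition rotv (j : nat) : 'cV[C]_2 :=
  \col_i (if i == ord0 then (rot_xy j).1 else (rot_xy j).2)%:C.

Definition rot : 'M[C]_2 :=
  \matrix_(i, j) (if i == j then 3 / 5 else if i == ord0 then - (4 / 5) else 4 / 5)%:C.

Lemma rot_xy_norm j : (rot_xy j).1 ^+ 2 + (rot_xy j).2 ^+ 2 = 1.
Proof.
elim: j => [|j]; first by rewrite /=; ring.
by rewrite rot_xyS; case: (rot_xy j) => x y /= norm1; rewrite -[X in _ = X]norm1; field.
Qed.

Lemma sqnorm_rotv j : sqnorm (rotv j) = 1.
Proof. by rewrite /sqnorm sum_ord2 !mxE /= !sqmodR rot_xy_norm. Qed.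

Lemma rot_rotv j : rot *m rotv j = rotv j.+1.
Proof.
apply/matrixP => i k; rewrite !mxE sum_ord2 !mxE rot_xyS; case: (rot_xy j) => x y /=.
by case: (ord2P i) => ->; apply/eqP; rewrite eq_complex /=; apply/andP; split; apply/eqP; ring.
Qed.

Lemma iter_rot_rotv k j : iter k (mulmx rot) (rotv j) = rotv (k + j).
Proof. by elim: k => [//|k IH]; rewrite /= IH rot_rotv. Qed.

Lemma rot_unitary : adjmx rot *m rot = 1%:M.
Proof.
apply/matrixP => i j; rewrite !mxE sum_ord2 /adjmx !mxE.
by case: (ord2P i) => ->; case: (ord2P j) => -> /=;
  apply/eqP; rewrite eq_complex /=; apply/andP; split; apply/eqP; field.
Qed.

Lemma rot_xy_mod5 j : (0 < j)%N -> exists a b : int,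
  (rot_xy j).1 = (5 * a + 3)%:~R / 5 ^+ j /\ (rot_xy j).2 = (5 * b + 4)%:~R / 5 ^+ j.
Proof.
elim: j => [//|[_ _|j IH _]]; first by exists 0, 0; split; rewrite /= expr1; field.
rewrite rot_xyS; case: (rot_xy j.+1) (IH isT) => x y /= [a [b [-> ->]]].
exists (3 * a - 4 * b - 2), (4 * a + 3 * b + 4).
by rewrite !exprS; split; field;
  rewrite expf_neq0 // pnatr_eq0.
Qed.

Lemma rot_xy2_neq0 j : (0 < j)%N -> (rot_xy j).2 != 0.
Proof.
move=> /rot_xy_mod5 [a [b [_ ->]]].
rewrite mulf_eq0 negb_or invr_eq0 expf_neq0 ?pnatr_eq0 // andbT intr_eq0.
by apply/eqP; lia.
Qed.

Definition rot_U (b : bool) : 'M[C]_2 := if b then rot else 1%:M.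

Lemma rot_U_unitary b : adjmx (rot_U b) *m rot_U b = 1%:M.
Proof. by case: b; rewrite ?rot_unitary //= /adjmx map_mx1 trmx1 mulmx1. Qed.

Definition rot_aut : qautomaton R bool :=
  @QAut R bool 2 (rotv 1) rot_U (delta_mx ord0 ord0) (sqnorm_rotv 1) rot_U_unitary.

Lemma inF_rot_aut (v : 'cV[C]_2) : inF (A:=rot_aut) v -> v ord_max 0 = 0.
Proof.
move=> /submxP [D /(congr1 (fun M : 'M[C]_(1, 2) => M 0 ord_max))].
by rewrite !mxE sum_ord2 !mxE /= !mulr0 addr0.
Qed.

Lemma inF_rotv0 : inF (A:=rot_aut) (rotv 0).
Proof.
apply/submxP; exists (rotv 0)^T; apply/matrixP => i j; rewrite !mxE sum_ord2 !mxE.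
by case: (ord2P j) => -> /=; rewrite ?mulr1 ?mulr0 ?addr0 ?add0r.
Qed.

Lemma sqmod_inner_rot_aut (psi s : 'cV[C]_2) : inF (A:=rot_aut) psi -> sqnorm psi = 1 ->
  sqmod (inner psi s) = sqmod (s ord0 0).
Proof.
move=> /inF_rot_aut psi2; rewrite /sqnorm sum_ord2 psi2 sqmodR expr0n addr0 => psi1.
by rewrite /inner sum_ord2 psi2 conjc0 mul0r addr0 sqmodM sqmodJ psi1 mul1r.
Qed.

Lemma run_rot_aut_true k : run rot_aut (fun _ => true) k = rotv k.+1.
Proof. by elim: k => [//|k IH]; rewrite /= IH rot_rotv. Qed.

Lemma run_rot_aut_prefix n0 k :
  run rot_aut (fun t => (t < n0)%N) k = rotv (minn k n0).+1.
Proof.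
elim: k => [|k IH] /=; first by rewrite min0n.
rewrite IH; case: (ltnP k n0) => [lt_kn | le_nk] /=.
  by rewrite rot_rotv (minn_idPl lt_kn).
by rewrite mul1mx (minn_idPr (leq_trans le_nk (leqnSn k))).
Qed.

Lemma fD_rot_aut_true : fD rot_aut (fun _ => true) = 1.
Proof.
have F_unit : exists2 psi, sqnorm psi = 1 & inF (A:=rot_aut) psi.
  by exists (rotv 0); [exact: sqnorm_rotv | exact: inF_rotv0].
apply/eqP; rewrite eq_le fD_le1 //=; apply/ler_addgt0Pr => eps eps_gt0.
have [m m_gt0 le_q] := unitary_recurrence rot_unitary (sqnorm_rotv 0) eps_gt0.
have := fD_ge_periodic (A := rot_aut) (w := fun _ => true) (b := true) (n0 := m.-1)
  (sqnorm_rotv 0) inF_rotv0 m_gt0 (fun _ _ => erefl).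
have -> : run rot_aut (fun _ => true) m.-1 = iter m (mulmx rot) (rotv 0).
  by rewrite run_rot_aut_true iter_rot_rotv addn0 prednK.
rewrite /= minxx; lra.
Qed.

Lemma fD_rot_aut_prefix n0 : fD rot_aut (fun t => (t < n0)%N) < 1.
Proof.
have y_sqr_gt0 j : 0 < (rot_xy j.+1).2 ^+ 2 by rewrite exprn_even_gt0 // rot_xy2_neq0.
have [d d_gt0 le_d] := pos_lower_bound n0 y_sqr_gt0.
apply: (@le_lt_trans _ _ (1 - d)); last by lra.
apply: fD_le => [|psi ns psi1 psiF ns_incr].
  by exists (rotv 0); [exact: sqnorm_rotv | exact: inF_rotv0].
rewrite sqmod_inner_rot_aut // drun_run; last by move=> i; apply: strict_incr_ge.
rewrite run_rot_aut_prefix !mxE eqxx sqmodR.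
have := le_d _ (geq_minr (ns 0%N) n0); have := rot_xy_norm (minn (ns 0%N) n0).+1.
lra.
Qed.

End RotationAutomaton.

Theorem theorem6 (R : realType) (lam : R) (hlam : 0 <= lam < 1) :
  exists (Sigma : finType) (A : qautomaton R Sigma),
    forall B : qautomaton R Sigma, lang_eq1 A <> lang_gt lam B.
Proof.
exists bool, (rot_aut R) => B eq_lang.
have /(lang_gt_splice hlam) [n0 lt_splice] : lang_gt lam B (fun _ => true).
  by rewrite -eq_lang; exact: fD_rot_aut_true.
have : lang_eq1 (rot_aut R) (fun t => (t < n0)%N).
  rewrite eq_lang /lang_gt /=; have := lt_splice false.
  by congr (_ < fD B _); apply: funext => t; case: ltnP.
by rewrite /lang_eq1 /= => eq1; have := fD_rot_aut_prefix R n0; rewrite eq1 ltxx.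
Qed.
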